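(* Let $\lambda>0$, let $x^{(1)},\dots,x^{(N)}\in\mathbb{R}^d$ and $\hat\mu=\frac1N\sum_{i=1}^N\delta_{x^{(i)}}$. Define $D_{XX}\in\mathbb{R}^{(Nd)\times N}$ by $[D_{XX}]_{(i,l),j}=\partial_{1,l}k(x^{(i)},x^{(j)})$, $H_{XX}\in\mathbb{R}^{(Nd)\times(Nd)}$ by $[H_{XX}]_{(i,l),(j,m)}=\partial_{1,l}\partial_{2,m}k(x^{(i)},x^{(j)})$, and for $z\in\mathbb{R}^d$ the vectors $\mathbb K_X(z)=[k(x^{(1)},z),\dots,k(x^{(N)},z)]^\top\in\mathbb{R}^N$ and $\mathbb D_X(z)\in\mathbb{R}^{Nd}$ with entries $[\mathbb D_X(z)]_{(i,l)}=\partial_{1,l}k(x^{(i)},z)$. Let $\mathbf 1_N\in\mathbb{R}^N$ be the all-ones vector. Then for all $z\in\mathbb{R}^d$, $$f_{\hat\mu,\pi}(z)=\frac{\mathbf 1_N^\top\mathbb K_X(z)}{N\lambda}-\frac{\mathbb E_{Y\sim\pi}[k(Y,z)]}{\lambda}-\mathbb D_X(z)^\top(H_{XX}+N\lambda\mathrm{Id})^{-1}\Big(\frac{D_{XX}\mathbf 1_N}{N\lambda}-\frac{\mathbb E_{Y\sim\pi}[\mathbb D_X(Y)]}{\lambda}\Big).$$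
   Context: $k$ is a symmetric positive definite kernel on $\mathbb{R}^d$, sufficiently continuously differentiable, with RKHS $\mathcal H$; $\partial_{1,l},\partial_{2,m}$ are partial derivatives in the first/second argument. $\pi$ is a probability measure for which the mean embedding $m_\pi=\int k(y,\cdot)\mathrm{d}\pi(y)\in\mathcal H$ is well defined; $m_{\hat\mu}=\frac1N\sum_ik(x^{(i)},\cdot)$. $S_{\hat\mu}:\mathcal H\to\mathcal H$ is defined by $\langle f,S_{\hat\mu}g\rangle_{\mathcal H}=\frac1N\sum_{i=1}^N\nabla f(x^{(i)})^\top\nabla g(x^{(i)})$, and $f_{\hat\mu,\pi}:=(S_{\hat\mu}+\lambda\mathrm{Id})^{-1}(m_{\hat\mu}-m_\pi)$. Index pairs $(i,l)$, $i\le N$, $l\le d$, are identified with indices $1,\dots,Nd$ in a fixed order. *)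

From HB Require Import structures.
From mathcomp Require Import all_boot all_order all_algebra.
From mathcomp Require Import all_classical all_reals all_analysis.
Set Implicit Arguments. Unset Strict Implicit. Unset Printing Implicit Defensive.
Import Order.TTheory GRing.Theory Num.Theory.
Import numFieldNormedType.Exports.
Local Open Scope classical_set_scope.
Local Open Scope ring_scope.

Section Defs.
Variables (R : realType) (d : nat).
Local Notation V := 'rV[R]_d.
Local Notation F := (V -> R).

Definition ebasis (l : 'I_d) : V := delta_mx 0 l.

Definition partial (l : 'I_d) (f : F) (x : V) : R := 'D_(ebasis l) f x.

Definition d1k (k : V -> V -> R) (l : 'I_d) (x y : V) : R :=
  partial l (fun x' => k x' y) x.
Definition d2k (k : V -> V -> R) (m : 'I_d) (x y : V) : R :=
  partial m (fun y' => k x y') y.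
Definition d12k (k : V -> V -> R) (l m : 'I_d) (x y : V) : R :=
  partial l (fun x' => d2k k m x' y) x.

Definition kernel_spd (k : V -> V -> R) : Prop :=
  (forall x y, k x y = k y x) /\
  (forall (n : nat) (c : 'I_n -> R) (p : 'I_n -> V),
      0 <= \sum_(i < n) \sum_(j < n) c i * c j * k (p i) (p j)).

Definition kernel_C11 (k : V -> V -> R) : Prop :=
  continuous (fun q : V * V => k q.1 q.2) /\
  (forall l x y, derivable (fun x' => k x' y) x (ebasis l)) /\
  (forall m x y, derivable (fun y' => k x y') y (ebasis m)) /\
  (forall l m x y, derivable (fun x' => d2k k m x' y) x (ebasis l)) /\
  (forall l, continuous (fun q : V * V => d1k k l q.1 q.2)) /\
  (forall m, continuous (fun q : V * V => d2k k m q.1 q.2)) /\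
  (forall l m, continuous (fun q : V * V => d12k k l m q.1 q.2)).

Definition is_RKHS (k : V -> V -> R) (H : set F) (ip : F -> F -> R) : Prop :=
  H (fun=> 0) /\
  (forall f g, H f -> H g -> H (f \+ g)) /\
  (forall (a : R) f, H f -> H (fun x => a * f x)) /\
  (forall f g, H f -> H g -> ip f g = ip g f) /\
  (forall f g h, H f -> H g -> H h -> ip (f \+ g) h = ip f h + ip g h) /\
  (forall (a : R) f g, H f -> H g -> ip (fun x => a * f x) g = a * ip f g) /\
  (forall f, H f -> 0 <= ip f f) /\
  (forall f, H f -> ip f f = 0 -> f = (fun=> 0)) /\
  (forall u : nat -> F, (forall n, H (u n)) ->
     (forall e : R, 0 < e -> exists M, forall m n, (M <= m)%N -> (M <= n)%N ->
        ip (u m \- u n) (u m \- u n) < e) ->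
     exists f, H f /\ forall e : R, 0 < e -> exists M, forall n, (M <= n)%N ->
        ip (u n \- f) (u n \- f) < e) /\
  (forall x, H (k x)) /\
  (forall f x, H f -> ip f (k x) = f x).

(* m is the mean embedding of the law pi of Y (weak/Pettis integral of
   y |-> k(y,.)): m in H and <g, m> = E[g(Y)] for all g in H *)
Definition is_mean_embedding (dT : measure_display) (T : measurableType dT)
    (P : probability T R) (Y : T -> V) (H : set F) (ip : F -> F -> R) (m : F) :=
  H m /\ forall g, H g ->
    P.-integrable setT (fun t => (g (Y t))%:E) /\
    ip g m = Rintegral P setT (fun t => g (Y t)).

Definition is_S_op (N : nat) (x : 'I_N -> V) (H : set F) (ip : F -> F -> R)
    (S : F -> F) : Prop :=
  forall g, H g -> H (S g) /\
    forall f, H f -> ip f (S g) =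
      N%:R^-1 * \sum_(i < N) \sum_(l < d) partial l f (x i) * partial l g (x i).

(* index pairs (i,l) <-> 'I_(N*d), via MathComp's fixed flattening order *)
Definition pair_of (N : nat) (q : 'I_(N * d)) : 'I_N * 'I_d :=
  enum_val (cast_ord (esym (mxvec_cast N d)) q).

Definition DXX (k : V -> V -> R) (N : nat) (x : 'I_N -> V) : 'M[R]_(N * d, N) :=
  \matrix_(q, j) d1k k (pair_of q).2 (x (pair_of q).1) (x j).
Definition HXX (k : V -> V -> R) (N : nat) (x : 'I_N -> V) : 'M[R]_(N * d) :=
  \matrix_(q, r) d12k k (pair_of q).2 (pair_of r).2 (x (pair_of q).1) (x (pair_of r).1).
Definition KX (k : V -> V -> R) (N : nat) (x : 'I_N -> V) (z : V) : 'cV[R]_N :=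
  \col_i k (x i) z.
Definition DX (k : V -> V -> R) (N : nat) (x : 'I_N -> V) (z : V) : 'cV[R]_(N * d) :=
  \col_q d1k k (pair_of q).2 (x (pair_of q).1) z.

End Defs.

From HB Require Import structures.
From mathcomp Require Import all_boot all_order all_algebra.
From mathcomp Require Import all_classical all_reals all_analysis.
From mathcomp Require Import lra ring.
Import Order.TTheory GRing.Theory Num.Theory.
Import numFieldNormedType.Exports.
Set Implicit Arguments. Unset Strict Implicit. Unset Printing Implicit Defensive.
Local Open Scope classical_set_scope.
Local Open Scope ring_scope.

(* Testing the equation (S + lambda) f = m_muhat - m_pi against h in H gives an
   identity involving only f, the values of h at the data and the gradients of h
   at the data.  Gradients are inner products thanks to the derivative
   reproducing property: d_l h(a) = <h, d_{1,l} k(a, .)> with d_{1,l} k(a, .) in H.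
   It holds because the difference quotients (k(a + s e_l, .) - k(a, .)) / s have
   Gram values that are mixed second differences of k divided by s t; by a
   two-variable mean value argument and continuity of d_{1,l} d_{2,l} k these
   converge as s, t -> 0, so the quotients converge in the complete space H.
   Testing against the features d_{1,l} k(x_i, .) yields the linear system
   (H_XX + N lambda) grad f(X) = D_XX 1 - N E[D_X(Y)], whose matrix is a Gram
   matrix plus a positive multiple of the identity and hence invertible; testing
   against k(z, .) then expresses f(z) through grad f(X). *)

Lemma invSn_small (R : realType) (del : R) : 0 < del ->
  exists M, forall n, (M <= n)%N -> `|n.+1%:R^-1 : R| < del.
Proof.
move=> del0; exists (Num.truncn del^-1) => n hn.
rewrite ger0_norm ?invr_ge0 // invf_plt ?posrE //.
by apply: lt_le_trans (truncnS_gt _) _; rewrite ler_nat ltnS.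
Qed.

Lemma near_dnbhs0_ball (R : realType) (P : R -> Prop) :
  (exists2 del : R, 0 < del & forall h, h != 0 -> `|h| < del -> P h) ->
  \forall h \near (0 : R)^', P h.
Proof.
move=> [del del0 hP]; change (\forall h \near (0 : R), h != 0 -> P h).
by apply/nbhs_norm0P; exists del => // h /= hh h0; exact: hP.
Qed.

Section InnerProduct.
Variables (R : realType) (d : nat) (k : 'rV[R]_d -> 'rV[R]_d -> R).
Variables (H : set ('rV[R]_d -> R)) (ip : ('rV[R]_d -> R) -> ('rV[R]_d -> R) -> R).
Hypothesis hR : is_RKHS k H ip.
Local Notation F := ('rV[R]_d -> R).

Lemma rkhs_mem0 : H (fun=> 0).
Proof. by have [] := hR. Qed.

Lemma rkhs_memD f g : H f -> H g -> H (f \+ g).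
Proof. by have [_ [HD _]] := hR; apply: HD. Qed.

Lemma rkhs_memZ a f : H f -> H (fun x => a * f x).
Proof. by have [_ [_ [HZ _]]] := hR; apply: HZ. Qed.

Lemma ipC f g : H f -> H g -> ip f g = ip g f.
Proof. by have [_ [_ [_ [C _]]]] := hR; apply: C. Qed.

Lemma ipDl f g h : H f -> H g -> H h -> ip (f \+ g) h = ip f h + ip g h.
Proof. by have [_ [_ [_ [_ [D _]]]]] := hR; apply: D. Qed.

Lemma ipZl a f g : H f -> H g -> ip (fun x => a * f x) g = a * ip f g.
Proof. by have [_ [_ [_ [_ [_ [Z _]]]]]] := hR; apply: Z. Qed.

Lemma ip_ge0 f : H f -> 0 <= ip f f.
Proof. by have [_ [_ [_ [_ [_ [_ [P _]]]]]]] := hR; apply: P. Qed.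

Lemma ip_eq0 f : H f -> ip f f = 0 -> f = (fun=> 0).
Proof. by have [_ [_ [_ [_ [_ [_ [_ [E _]]]]]]]] := hR; apply: E. Qed.

Lemma rkhs_complete (u : nat -> F) : (forall n, H (u n)) ->
  (forall e : R, 0 < e -> exists M, forall m n, (M <= m)%N -> (M <= n)%N ->
     ip (u m \- u n) (u m \- u n) < e) ->
  exists f, H f /\ forall e : R, 0 < e -> exists M, forall n, (M <= n)%N ->
     ip (u n \- f) (u n \- f) < e.
Proof. by have [_ [_ [_ [_ [_ [_ [_ [_ [C _]]]]]]]]] := hR; apply: C. Qed.

Lemma rkhs_mem_kernel y : H (k y).
Proof. by have [_ [_ [_ [_ [_ [_ [_ [_ [_ [K _]]]]]]]]]] := hR; apply: K. Qed.

Lemma ip_kernel f y : H f -> ip f (k y) = f y.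
Proof. by have [_ [_ [_ [_ [_ [_ [_ [_ [_ [_ rep]]]]]]]]]] := hR; apply: rep. Qed.

Lemma kernel_sym y z : k y z = k z y.
Proof.
have Hy := rkhs_mem_kernel y; have Hz := rkhs_mem_kernel z.
by rewrite -[LHS](ip_kernel z Hy) ipC // ip_kernel.
Qed.

Lemma ipDr f g h : H f -> H g -> H h -> ip h (f \+ g) = ip h f + ip h g.
Proof.
move=> Hf Hg Hh.
by rewrite (ipC Hh (rkhs_memD Hf Hg)) (ipDl Hf Hg Hh) (ipC Hf Hh) (ipC Hg Hh).
Qed.

Lemma ipZr a f g : H f -> H g -> ip g (fun x => a * f x) = a * ip g f.
Proof.
by move=> Hf Hg; rewrite (ipC Hg (rkhs_memZ a Hf)) (ipZl a Hf Hg) (ipC Hf Hg).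
Qed.

Lemma subf_scaleN1 (f g : F) : f \- g = f \+ (fun x => -1 * g x).
Proof. by apply/funext => y /=; rewrite mulN1r. Qed.

Lemma rkhs_memB f g : H f -> H g -> H (f \- g).
Proof. by move=> Hf Hg; rewrite subf_scaleN1; exact/rkhs_memD/rkhs_memZ. Qed.

Lemma ipBl f g h : H f -> H g -> H h -> ip (f \- g) h = ip f h - ip g h.
Proof.
move=> Hf Hg Hh.
by rewrite subf_scaleN1 (ipDl Hf (rkhs_memZ _ Hg) Hh) (ipZl _ Hg Hh) mulN1r.
Qed.

Lemma ipBr f g h : H f -> H g -> H h -> ip h (f \- g) = ip h f - ip h g.
Proof.
move=> Hf Hg Hh.
by rewrite (ipC Hh (rkhs_memB Hf Hg)) (ipBl Hf Hg Hh) (ipC Hf Hh) (ipC Hg Hh).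
Qed.

Lemma ip0l h : H h -> ip (fun=> 0) h = 0.
Proof.
move=> Hh; transitivity (ip (fun=> 0 * 0) h).
  by congr ip; apply/funext => y; rewrite mul0r.
by rewrite (ipZl _ rkhs_mem0 Hh) mul0r.
Qed.

Lemma sumf_recr n (G : 'I_n.+1 -> F) :
  (fun z => \sum_(i < n.+1) G i z)
  = (fun z => \sum_(i < n) G (widen_ord (leqnSn n) i) z) \+ G ord_max.
Proof. by apply/funext => z; rewrite big_ord_recr. Qed.

Lemma sumf_ord0 (G : 'I_0 -> F) : (fun z => \sum_(i < 0) G i z) = fun=> 0.
Proof. by apply/funext => z; rewrite big_ord0. Qed.

Lemma rkhs_mem_sum n (G : 'I_n -> F) :
  (forall i, H (G i)) -> H (fun z => \sum_(i < n) G i z).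
Proof.
elim: n G => [|n IH] G HG; first by rewrite sumf_ord0; exact: rkhs_mem0.
by rewrite sumf_recr; apply: rkhs_memD; [exact: IH | exact: HG].
Qed.

Lemma ip_suml n (G : 'I_n -> F) h : (forall i, H (G i)) -> H h ->
  ip (fun z => \sum_(i < n) G i z) h = \sum_(i < n) ip (G i) h.
Proof.
elim: n G => [|n IH] G HG Hh; first by rewrite sumf_ord0 big_ord0 ip0l.
rewrite sumf_recr ipDl //; last exact: rkhs_mem_sum.
by rewrite IH // big_ord_recr.
Qed.

Lemma gram_psd n (G : 'I_n -> F) (A : 'M[R]_n) : (forall q, H (G q)) ->
  (forall q r, A q r = ip (G q) (G r)) -> forall w : 'rV_n, 0 <= (w *m A *m w^T) 0 0.
Proof.
move=> HG AE w.
have HwG q : H (fun z => w 0 q * G q z) := rkhs_memZ (w 0 q) (HG q).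
pose Phi z := \sum_(q < n) w 0 q * G q z.
have HPhi : H Phi := rkhs_mem_sum HwG.
suff -> : (w *m A *m w^T) 0 0 = ip Phi Phi by exact: ip_ge0.
rewrite (ip_suml HwG HPhi) mxE; apply: eq_bigr => r _.
rewrite (ipZl _ (HG r) HPhi) (ipC (HG r) HPhi) (ip_suml HwG (HG r)) !mxE mulrC.
by congr (_ * _); apply: eq_bigr => q _; rewrite (ipZl _ (HG q) (HG r)) AE.
Qed.

Lemma ip_sqrD f g : H f -> H g ->
  ip (f \+ g) (f \+ g) = ip f f + 2 * ip f g + ip g g.
Proof.
move=> Hf Hg; have Hfg := rkhs_memD Hf Hg.
by rewrite (ipDl Hf Hg Hfg) !ipDr // (ipC Hg Hf); ring.
Qed.

Lemma ip_sqrB f g : H f -> H g ->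
  ip (f \- g) (f \- g) = ip f f - 2 * ip f g + ip g g.
Proof.
move=> Hf Hg; have Hfg := rkhs_memB Hf Hg.
by rewrite (ipBl Hf Hg Hfg) !ipBr // (ipC Hg Hf); ring.
Qed.

Lemma ip_sqr_triangle u v w : H u -> H v -> H w ->
  ip (u \- w) (u \- w) <= 2 * (ip (u \- v) (u \- v) + ip (v \- w) (v \- w)).
Proof.
move=> Hu Hv Hw; have Huv := rkhs_memB Hu Hv; have Hvw := rkhs_memB Hv Hw.
have -> : u \- w = (u \- v) \+ (v \- w) by apply/funext => y /=; ring.
have := ip_ge0 (rkhs_memB Huv Hvw).
by rewrite (ip_sqrB Huv Hvw) (ip_sqrD Huv Hvw); lra.
Qed.

Lemma ip_CauchySchwarz f g : H f -> H g -> ip f g ^+ 2 <= ip f f * ip g g.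
Proof.
move=> Hf Hg; have [g0|gpos] := eqVneq (ip g g) 0.
  rewrite (ip_eq0 Hg g0) (ipC Hf rkhs_mem0) (ip0l Hf) (ip0l rkhs_mem0).
  by rewrite expr2 !mul0r mulr0.
have gp : 0 < ip g g by rewrite lt_def gpos ip_ge0.
set t := ip f g / ip g g; have Htg := rkhs_memZ t Hg.
have := ip_ge0 (rkhs_memB Hf Htg).
rewrite (ip_sqrB Hf Htg) (ipZr t Hg Hf) (ipZl t Hg Htg) (ipZr t Hg Hg).
have -> : ip f f - 2 * (t * ip f g) + t * (t * ip g g)
        = (ip f f * ip g g - ip f g ^+ 2) / ip g g.
  by rewrite /t; field.
by rewrite pmulr_lge0 ?invr_gt0 // subr_ge0.
Qed.

Lemma ip_close (e : R) u v w : 0 < e -> H u -> H v -> H w ->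
  ip (u \- v) (u \- v) < e ^+ 2 / (ip w w + 1) -> `|ip u w - ip v w| < e.
Proof.
move=> e0 Hu Hv Hw; have Huv := rkhs_memB Hu Hv.
have w0 := ip_ge0 Hw; have uv0 := ip_ge0 Huv.
rewrite ltr_pdivlMr ?ltr_wpDl // => uv_small.
have := ip_CauchySchwarz Huv Hw; rewrite (ipBl Hu Hv Hw).
have : ip (u \- v) (u \- v) * ip w w <= ip (u \- v) (u \- v) * (ip w w + 1).
  by rewrite ler_wpM2l // lerDl.
move: uv_small; set s := ip u w - ip v w => ? ? ?.
have : s ^+ 2 < e ^+ 2 by lra.
by rewrite ltr_norml => ?; apply/andP; split; nra.
Qed.

Lemma rkhs_family_cvg (q : R -> F) (c : R) : (forall s, H (q s)) ->
  (forall e : R, 0 < e -> exists2 del : R, 0 < del & forall s t : R,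
     s != 0 -> t != 0 -> `|s| < del -> `|t| < del -> `|ip (q s) (q t) - c| < e) ->
  exists2 g, H g & forall e : R, 0 < e -> exists2 del : R, 0 < del & forall s : R,
     s != 0 -> `|s| < del -> ip (q s \- g) (q s \- g) < e.
Proof.
move=> Hq gram.
have dist_small e : 0 < e -> exists2 del : R, 0 < del & forall s t : R,
    s != 0 -> t != 0 -> `|s| < del -> `|t| < del -> ip (q s \- q t) (q s \- q t) < e.
  move=> e0; have [del del0 hdel] := gram (e / 4) (divr_gt0 e0 (ltr0n _ 4)).
  exists del => // s t s0 t0 hs ht; rewrite (ip_sqrB (Hq s) (Hq t)).
  move: (hdel s s s0 s0 hs hs) (hdel s t s0 t0 hs ht) (hdel t t t0 t0 ht ht).
  by rewrite !ltr_distlC => /andP[? ?] /andP[? ?] /andP[? ?]; lra.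
pose u n := q n.+1%:R^-1.
have invSn_neq0 n : n.+1%:R^-1 != 0 :> R by rewrite invr_eq0 pnatr_eq0.
have [|g [Hg u_g]] := @rkhs_complete u (fun n => Hq _).
  move=> e e0; have [del del0 hdel] := dist_small e e0.
  have [M hM] := invSn_small del0.
  by exists M => m n hm hn; apply: hdel; rewrite ?invSn_neq0 ?hM.
exists g => // e e0.
have [del del0 hdel] := dist_small (e / 4) (divr_gt0 e0 (ltr0n _ 4)).
have [M hM] := u_g (e / 4) (divr_gt0 e0 (ltr0n _ 4)).
have [M' hM'] := invSn_small del0.
exists del => // s s0 hs; pose n := maxn M M'.
apply: le_lt_trans (ip_sqr_triangle (Hq s) (Hq n.+1%:R^-1) Hg) _.
have := hdel s n.+1%:R^-1 s0 (invSn_neq0 n) hs (hM' n (leq_maxr _ _)).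
have := hM n (leq_maxl _ _).
by rewrite /u; lra.
Qed.

End InnerProduct.

Section MeanValue.
Variable R : realType.

Lemma MVT_origin (phi dphi : R -> R) (s : R) :
  (forall u : R, is_derive u (1 : R) phi (dphi u)) ->
  exists2 xi, `|xi| <= `|s| & phi s - phi 0 = s * dphi xi.
Proof.
move=> dphiP.
have phi_cont a b : {within `[a, b], continuous phi}.
  apply: derivable_within_continuous => u _.
  exact: (@ex_derive _ _ _ _ _ _ _ (dphiP u)).
have [s0|s0] := leP 0 s.
  have [c] := MVT_segment s0 (fun u _ => dphiP u) (phi_cont 0 s).
  rewrite in_itv /= => /andP[c0 cs] ->; exists c; last by rewrite subr0 mulrC.
  by rewrite !ger0_norm // (le_trans c0).
have [c] := MVT_segment (ltW s0) (fun u _ => dphiP u) (phi_cont s 0).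
rewrite in_itv /= => /andP[sc c0] mvt; exists c.
  by rewrite !ler0_norm ?lerN2 // ltW.
by move: mvt; rewrite sub0r; lra.
Qed.

Variable d : nat.

Lemma is_derive_line (G : 'rV[R]_d -> R) (a e : 'rV[R]_d) (u : R) :
  derivable G (u *: e + a) e ->
  is_derive u (1 : R) (fun t : R => G (t *: e + a)) ('D_e G (u *: e + a)).
Proof.
move=> dG.
have quotE : (fun h : R => h^-1 *: (((fun t : R => G (t *: e + a)) \o shift u) (h *: 1)
                                   - G (u *: e + a)))
    = (fun h : R => h^-1 *: ((G \o shift (u *: e + a)) (h *: e) - G (u *: e + a))).
  by apply/funext => h /=; rewrite scaler1 scalerDl addrA.
by apply: DeriveDef; rewrite /derivable /derive quotE.
Qed.

Lemma line_in_ball (a e : 'rV[R]_d) (r xi : R) :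
  0 < r -> `|xi| < r / (`|e| + 1) -> ball a r (xi *: e + a).
Proof.
move=> r0; rewrite ltr_pdivlMr ?ltr_wpDl // => hxi.
rewrite -ball_normE /ball_ /= opprD addrCA subrr addr0 normrN normrZ.
by apply: le_lt_trans hxi; rewrite ler_wpM2l // lerDl.
Qed.

End MeanValue.

Section KernelIncrements.
Variables (R : realType) (d : nat) (k : 'rV[R]_d -> 'rV[R]_d -> R).
Hypothesis kC11 : kernel_C11 k.

Lemma mixed_increment_mvt (a b : 'rV[R]_d) (l m : 'I_d) (s t : R) :
  exists xi eta, [/\ `|xi| <= `|s|, `|eta| <= `|t| &
    k (s *: ebasis R l + a) (t *: ebasis R m + b) - k (s *: ebasis R l + a) b
    - k a (t *: ebasis R m + b) + k a b
    = s * t * d12k k l m (xi *: ebasis R l + a) (eta *: ebasis R m + b)].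
Proof.
have [_ [_ [k_d2 [k_d12 _]]]] := kC11.
set e := ebasis R l; set e' := ebasis R m.
have d_left v : is_derive v (1 : R) (fun v => k (s *: e + a) (v *: e' + b))
                                    (d2k k m (s *: e + a) (v *: e' + b)).
  exact: is_derive_line (k_d2 m _ _).
have d_right v : is_derive v (1 : R) (fun v => k a (v *: e' + b)) (d2k k m a (v *: e' + b)).
  exact: is_derive_line (k_d2 m _ _).
have [eta heta mvt_t] := MVT_origin t (fun v => is_deriveB (d_left v) (d_right v)).
have d_mixed u : is_derive u (1 : R) (fun u => d2k k m (u *: e + a) (eta *: e' + b))
                                     (d12k k l m (u *: e + a) (eta *: e' + b)).
  exact: is_derive_line (k_d12 l m _ _).
have [xi hxi mvt_s] := MVT_origin s d_mixed.
exists xi, eta; split => //.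
move: mvt_t mvt_s; rewrite !fctE !scale0r !add0r => mvt_t mvt_s.
by rewrite [s * t]mulrC -mulrA -mvt_s -mvt_t; ring.
Qed.

Lemma d12k_line_near (a b : 'rV[R]_d) (l m : 'I_d) (eps : R) : 0 < eps ->
  exists2 del : R, 0 < del & forall xi eta : R, `|xi| < del -> `|eta| < del ->
    `|d12k k l m a b - d12k k l m (xi *: ebasis R l + a) (eta *: ebasis R m + b)| < eps.
Proof.
have [_ [_ [_ [_ [_ [_ d12k_cont]]]]]] := kC11.
move=> eps0; have := d12k_cont l m (a, b).
move/cvgrPdist_lt => /(_ eps eps0) /nbhs_ballP [r r0 hr].
exists (Num.min (r / (`|ebasis R l| + 1)) (r / (`|ebasis R m| + 1))).
  by rewrite lt_min !divr_gt0 // ltr_wpDl.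
move=> xi eta; rewrite !lt_min => /andP[hxi _] /andP[_ heta].
by apply: (hr (xi *: ebasis R l + a, eta *: ebasis R m + b)); split; exact: line_in_ball.
Qed.

End KernelIncrements.

Definition kernel_quotient (R : realType) (d : nat) (k : 'rV[R]_d -> 'rV[R]_d -> R)
    (a e : 'rV[R]_d) (s : R) : 'rV[R]_d -> R :=
  fun y => s^-1 * (k (s *: e + a) y - k a y).

Section DerivativeReproducing.
Variables (R : realType) (d : nat) (k : 'rV[R]_d -> 'rV[R]_d -> R).
Variables (H : set ('rV[R]_d -> R)) (ip : ('rV[R]_d -> R) -> ('rV[R]_d -> R) -> R).
Hypotheses (kC11 : kernel_C11 k) (hR : is_RKHS k H ip).

Lemma d1k_kernel (l : 'I_d) (a y : 'rV[R]_d) : d1k k l a y = partial l (k y) a.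
Proof.
rewrite /d1k (_ : (fun x' => k x' y) = k y) //.
by apply/funext => x'; exact: (kernel_sym hR x' y).
Qed.

Lemma d2k_d1k (m : 'I_d) (a b : 'rV[R]_d) : d2k k m a b = d1k k m b a.
Proof. by rewrite d1k_kernel. Qed.

Lemma kernel_quotient_mem a e s : H (kernel_quotient k a e s).
Proof.
apply: (rkhs_memZ hR); apply: (rkhs_memB hR); exact: (rkhs_mem_kernel hR).
Qed.

Lemma ip_kernel_quotient f a e s : H f ->
  ip f (kernel_quotient k a e s) = s^-1 * (f (s *: e + a) - f a).
Proof.
move=> Hf; have Hs := rkhs_mem_kernel hR (s *: e + a); have Ha := rkhs_mem_kernel hR a.
rewrite (ipZr hR _ (rkhs_memB hR Hs Ha) Hf) (ipBr hR Hs Ha Hf).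
by rewrite !(ip_kernel hR _ Hf).
Qed.

Lemma kernel_quotient_gram (a : 'rV[R]_d) (l : 'I_d) (eps : R) : 0 < eps ->
  exists2 del : R, 0 < del & forall s t : R, s != 0 -> t != 0 ->
    `|s| < del -> `|t| < del ->
    `|ip (kernel_quotient k a (ebasis R l) s) (kernel_quotient k a (ebasis R l) t)
      - d12k k l l a a| < eps.
Proof.
move=> eps0; have [del del0 d12k_near] := d12k_line_near kC11 a a l l eps0.
exists del => // s t s0 t0 hs ht.
rewrite (ip_kernel_quotient _ _ _ (kernel_quotient_mem a _ s)) /kernel_quotient.
have [xi [eta [hxi heta]]] := mixed_increment_mvt kC11 a a l l s t.
set e := ebasis R l; set D := d12k k l l _ _ => incr.
have -> : t^-1 * (s^-1 * (k (s *: e + a) (t *: e + a) - k a (t *: e + a))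
                  - s^-1 * (k (s *: e + a) a - k a a)) = D.
  by apply: (mulfI (mulf_neq0 s0 t0)); rewrite -incr; field; rewrite s0 t0.
rewrite distrC; apply: d12k_near.
  exact: le_lt_trans hxi hs.
exact: le_lt_trans heta ht.
Qed.

Lemma rkhs_partial (a : 'rV[R]_d) (l : 'I_d) :
  H (d1k k l a) /\ forall f, H f -> partial l f a = ip f (d1k k l a).
Proof.
set e := ebasis R l.
have [g Hg quotient_to_g] :=
  rkhs_family_cvg hR (kernel_quotient_mem a e) (kernel_quotient_gram a l).
have partial_ip f : H f -> partial l f a = ip f g.
  move=> Hf; apply: cvg_lim => //; apply/cvgrPdist_lt => eps eps0.
  apply: near_dnbhs0_ball.
  have bound_gt0 : 0 < eps ^+ 2 / (ip f f + 1).
    by rewrite divr_gt0 ?exprn_gt0 // ltr_wpDl ?(ip_ge0 hR).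
  have [del del0 hdel] := quotient_to_g _ bound_gt0.
  exists del => // s s0 hs /=.
  rewrite -[s^-1 *: _]/(s^-1 * _) -ip_kernel_quotient // distrC.
  rewrite (ipC hR Hf Hg) (ipC hR Hf (kernel_quotient_mem a e s)).
  exact: (ip_close hR eps0 (kernel_quotient_mem a e s) Hg Hf (hdel s s0 hs)).
suff -> : d1k k l a = g by split.
apply/funext => y; have Hy := rkhs_mem_kernel hR y.
by rewrite d1k_kernel (partial_ip _ Hy) (ipC hR Hy Hg) (ip_kernel hR _ Hg).
Qed.

End DerivativeReproducing.

Lemma big_pair_of (R : realType) (N d : nat) (G : 'I_N -> 'I_d -> R) :
  \sum_(i < N) \sum_(l < d) G i l = \sum_(q < N * d) G (pair_of q).1 (pair_of q).2.
Proof.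
rewrite pair_big /=.
have pair_of_bij : bijective (@pair_of d N).
  exists (fun p => cast_ord (mxvec_cast N d) (enum_rank p)) => q.
    by rewrite /pair_of enum_valK cast_ordKV.
  by rewrite /pair_of cast_ordK enum_rankK.
by rewrite (reindex (@pair_of d N)) //; exact: onW_bij.
Qed.

Lemma psd_add_scalar_unitmx (R : realFieldType) (n : nat) (A : 'M[R]_n) (c : R) :
  (forall w : 'rV_n, 0 <= (w *m A *m w^T) 0 0) -> 0 < c -> A + c%:M \in unitmx.
Proof.
move=> A_psd c0.
suff ker0 (w : 'rV_n) : w *m (A + c%:M) = 0 -> w = 0.
  rewrite -row_free_unit -kermx_eq0; apply/eqP/row_matrixP => i.
  by rewrite row0; apply: ker0; rewrite -row_mul mulmx_ker row0.
move=> w_ker; have wA : w *m A = - (c *: w).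
  by apply/eqP; rewrite -subr_eq0 opprK -mul_mx_scalar -mulmxDr w_ker.
have := A_psd w; rewrite wA mulNmx -scalemxAl !mxE oppr_ge0 pmulr_rle0 //.
under eq_bigr do rewrite mxE -expr2.
move=> w_le0; have w_sq0 : \sum_j w 0 j ^+ 2 = 0.
  by apply/eqP; rewrite eq_le w_le0 sumr_ge0 // => j _; exact: sqr_ge0.
apply/rowP => j; apply/eqP; rewrite [X in _ == X]mxE -sqrf_eq0; apply/eqP.
by apply: (psumr_eq0P _ w_sq0) => // i _; exact: sqr_ge0.
Qed.

Definition dkX (R : realType) (d : nat) (k : 'rV[R]_d -> 'rV[R]_d -> R) (N : nat)
    (x : 'I_N -> 'rV[R]_d) (q : 'I_(N * d)) : 'rV[R]_d -> R :=
  d1k k (pair_of q).2 (x (pair_of q).1).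

Definition gradX (R : realType) (d N : nat) (x : 'I_N -> 'rV[R]_d)
    (h : 'rV[R]_d -> R) : 'cV[R]_(N * d) :=
  \col_q partial (pair_of q).2 h (x (pair_of q).1).

Section DataFeatures.
Variables (R : realType) (d : nat) (k : 'rV[R]_d -> 'rV[R]_d -> R).
Variables (H : set ('rV[R]_d -> R)) (ip : ('rV[R]_d -> R) -> ('rV[R]_d -> R) -> R).
Variables (N : nat) (x : 'I_N -> 'rV[R]_d).
Hypotheses (kC11 : kernel_C11 k) (hR : is_RKHS k H ip).

Lemma dkX_mem q : H (dkX k x q).
Proof. exact: (rkhs_partial kC11 hR _ _).1. Qed.

Lemma gradX_ip h q : H h -> gradX x h q 0 = ip h (dkX k x q).
Proof. by move=> Hh; rewrite mxE (rkhs_partial kC11 hR _ _).2. Qed.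

Lemma gradX_kernel z : gradX x (k z) = DX k x z.
Proof. by apply/colP => q; rewrite !mxE (d1k_kernel hR). Qed.

Lemma HXX_gram q r : HXX k x q r = ip (dkX k x q) (dkX k x r).
Proof.
have -> : HXX k x q r = gradX x (dkX k x r) q 0.
  rewrite [LHS]mxE /d12k (_ : (fun x' => _) = dkX k x r) ?mxE //.
  by apply/funext => y; exact: (d2k_d1k hR).
by rewrite (gradX_ip q (dkX_mem r)) (ipC hR (dkX_mem r) (dkX_mem q)).
Qed.

Lemma gradX_dkX r : (gradX x (dkX k x r))^T = row r (HXX k x).
Proof.
apply/rowP => q; rewrite [LHS]mxE [RHS]mxE.
by rewrite (gradX_ip q (dkX_mem r)) HXX_gram.
Qed.

Lemma HXX_psd (w : 'rV_(N * d)) : 0 <= (w *m HXX k x *m w^T) 0 0.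
Proof. exact: (gram_psd hR dkX_mem HXX_gram). Qed.

End DataFeatures.

Section RegularizedEquation.
Variables (R : realType) (d : nat) (k : 'rV[R]_d -> 'rV[R]_d -> R).
Variables (H : set ('rV[R]_d -> R)) (ip : ('rV[R]_d -> R) -> ('rV[R]_d -> R) -> R).
Variables (dT : measure_display) (T : measurableType dT) (P : probability T R).
Variables (Y : T -> 'rV[R]_d) (m_pi : 'rV[R]_d -> R) (lambda : R) (N : nat).
Variables (x : 'I_N -> 'rV[R]_d) (S : ('rV[R]_d -> R) -> 'rV[R]_d -> R).
Variable f : 'rV[R]_d -> R.
Hypotheses (kC11 : kernel_C11 k) (hR : is_RKHS k H ip).
Hypotheses (m_piP : is_mean_embedding P Y H ip m_pi) (N_gt0 : (0 < N)%N).
Hypotheses (SP : is_S_op x H ip S) (Hf : H f).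
Hypothesis f_eq : S f \+ (fun z => lambda * f z) =
  (fun z => N%:R^-1 * \sum_(i < N) k (x i) z) \- m_pi.

Let N_neq0 : N%:R != 0 :> R.
Proof. by rewrite pnatr_eq0 -lt0n. Qed.

(* <h, (S + lambda) f> = <h, m_muhat - m_pi>, multiplied by N. *)
Lemma tested_equation h : H h ->
  ((gradX x h)^T *m gradX x f) 0 0 + N%:R * lambda * ip h f
  = \sum_(i < N) h (x i) - N%:R * Rintegral P setT (fun t => h (Y t)).
Proof.
move=> Hh; have [HSf ip_Sf] := SP Hf; have [Hm ip_m] := m_piP.
have Hk i : H (k (x i)) := rkhs_mem_kernel hR (x i).
have Hsum := rkhs_mem_sum hR Hk; have Hlf := rkhs_memZ hR lambda Hf.
have := congr1 (ip h) f_eq.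
rewrite (ipDr hR HSf Hlf Hh) (ipBr hR (rkhs_memZ hR _ Hsum) Hm Hh).
rewrite (ipZr hR _ Hf Hh) (ipZr hR _ Hsum Hh) (ip_Sf h Hh) (ipC hR Hh Hsum).
rewrite (ip_suml hR Hk Hh) (ip_m h Hh).2 big_pair_of.
have -> : \sum_(i < N) ip (k (x i)) h = \sum_(i < N) h (x i).
  by apply: eq_bigr => i _; rewrite (ipC hR (Hk i) Hh) (ip_kernel hR _ Hh).
move=> /(congr1 ( *%R N%:R)); rewrite mulrDr mulrBr !mulrA (mulfV N_neq0) !mul1r => <-.
by congr (_ + _); rewrite mxE; apply: eq_bigr => q _; rewrite !mxE.
Qed.

Lemma linear_system :
  (HXX k x + (N%:R * lambda)%:M) *m gradX x f
  = DXX k x *m const_mx 1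
    - N%:R *: \col_q Rintegral P setT
                      (fun t => d1k k (pair_of q).2 (x (pair_of q).1) (Y t)).
Proof.
apply/colP => r; have Hr := dkX_mem x kC11 hR r.
have := tested_equation Hr.
rewrite (gradX_dkX x kC11 hR) -row_mul (ipC hR Hr Hf) -(gradX_ip x kC11 hR r Hf).
rewrite mulmxDl mul_scalar_mx !mxE => ->.
by congr (_ - _); apply: eq_bigr => j _; rewrite !mxE mulr1.
Qed.

Lemma pointwise_equation z :
  ((DX k x z)^T *m gradX x f) 0 0 + N%:R * lambda * f z
  = ((const_mx 1 : 'cV[R]_N)^T *m KX k x z) 0 0
    - N%:R * Rintegral P setT (fun t => k (Y t) z).
Proof.
have Hz := rkhs_mem_kernel hR z.
have := tested_equation Hz.
rewrite (gradX_kernel x hR) (ipC hR Hz Hf) (ip_kernel hR _ Hf) => ->.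
congr (_ - _ * _).
  by rewrite mxE; apply: eq_bigr => i _; rewrite !mxE mul1r (kernel_sym hR).
by congr Rintegral; apply/funext => t; exact: (kernel_sym hR _ _).
Qed.

End RegularizedEquation.

Theorem proposition2 (R : realType) (d : nat) (k : 'rV[R]_d -> 'rV[R]_d -> R)
  (H : set ('rV[R]_d -> R)) (ip : ('rV[R]_d -> R) -> ('rV[R]_d -> R) -> R)
  (dT : measure_display) (T : measurableType dT) (P : probability T R)
  (Y : T -> 'rV[R]_d) (m_pi : 'rV[R]_d -> R)
  (lambda : R) (N : nat) (x : 'I_N -> 'rV[R]_d)
  (S : ('rV[R]_d -> R) -> ('rV[R]_d -> R)) (f : 'rV[R]_d -> R) :
  kernel_spd k -> kernel_C11 k -> is_RKHS k H ip ->
  is_mean_embedding P Y H ip m_pi ->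
  0 < lambda -> (0 < N)%N ->
  is_S_op x H ip S ->
  (* f = f_{muhat,pi} = (S + lambda Id)^{-1} (m_muhat - m_pi) *)
  H f ->
  (S f \+ (fun z => lambda * f z)) =
    (fun z => N%:R^-1 * \sum_(i < N) k (x i) z) \- m_pi ->
  forall z : 'rV[R]_d,
    f z =
      ((const_mx 1 : 'cV[R]_N)^T *m KX k x z) 0 0 / (N%:R * lambda)
      - Rintegral P setT (fun t => k (Y t) z) / lambda
      - ((DX k x z)^T *m invmx (HXX k x + (N%:R * lambda)%:M)
           *m ((N%:R * lambda)^-1 *: (DXX k x *m (const_mx 1 : 'cV[R]_N))
               - lambda^-1 *: \col_q Rintegral P setT
                                 (fun t => d1k k (pair_of q).2 (x (pair_of q).1) (Y t))))
        0 0.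
Proof.
move=> _ kC11 hR m_piP lambda_gt0 N_gt0 SP Hf f_eq z.
have N_neq0 : N%:R != 0 :> R by rewrite pnatr_eq0 -lt0n.
have lambda_neq0 : lambda != 0 by rewrite gt_eqF.
set M := HXX k x + _%:M; set b := DXX k x *m _; set E := \col_q _.
have M_unit : M \in unitmx.
  by apply: psd_add_scalar_unitmx; [exact: (HXX_psd x kC11 hR) | rewrite mulr_gt0 // ltr0n].
have gradX_f : gradX x f = invmx M *m (b - N%:R *: E).
  by rewrite -[b - _](linear_system kC11 hR m_piP N_gt0 SP Hf f_eq) mulKmx.
have -> : (N%:R * lambda)^-1 *: b - lambda^-1 *: E
          = (N%:R * lambda)^-1 *: (b - N%:R *: E).
  by rewrite scalerBr scalerA invfM mulrAC mulVf // mul1r.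
rewrite -scalemxAr -mulmxA -gradX_f.
have := pointwise_equation hR m_piP N_gt0 SP Hf f_eq z.
set a := (_ *m KX k x z) 0 0; set c := Rintegral _ _ _.
set w := (_ *m gradX x f) 0 0 => eq_z; rewrite mxE -/w.
have -> : a = w + N%:R * lambda * f z + N%:R * c by rewrite eq_z; ring.
by field; rewrite lambda_neq0 N_neq0.
Qed.
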